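(* Let $k\ge 2$ be even, let $\alpha_1,\dots,\alpha_k$ be positive integers with $n=\alpha_1+\cdots+\alpha_k$, let $G=C(\alpha_1,\dots,\alpha_k)$, and let $Q_L$ be the quotient matrix of its Laplacian with respect to the partition $\pi=\{\pi_1,\dots,\pi_k\}$. Then the eigenvalues of $Q_L$, listed as $\lambda_1\le\lambda_2\le\cdots\le\lambda_k$, are determined by $\lambda_1=0$, $\lambda_k=n$ and $$\lambda_i=\lambda_{i-1}+\alpha_{k-2(i-2)}\quad (i=2,3,\dots,\tfrac{k}{2}),\qquad \lambda_i=\lambda_{i+1}-\alpha_{2i-(k-1)}\quad (i=k-1,k-2,\dots,\tfrac{k}{2}+1).$$ (Explicitly, $\lambda_i=\alpha_k+\alpha_{k-2}+\cdots+\alpha_{k-2i+4}$ for $2\le i\le k/2$, and $\lambda_{k/2+i}=\sum_{l=1}^{k/2}\alpha_{2l}+\sum_{m=1}^{i}\alpha_{2m-1}$ for $1\le i\le k/2$.) Each of these is also a Laplacian eigenvalue of $G$.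
   Context: For positive integers $\alpha_1,\dots,\alpha_k$, the graph $C(\alpha_1,\dots,\alpha_k)$ is defined recursively by $C(\alpha_1)=\overline{K_{\alpha_1}}$ (the edgeless graph on $\alpha_1$ vertices) and $C(\alpha_1,\dots,\alpha_i)=\overline{C(\alpha_1,\dots,\alpha_{i-1})\cup K_{\alpha_i}}$ for $i=2,\dots,k$, where $\cup$ is disjoint union and the bar denotes graph complement. Let $\pi_i$ be the set of $\alpha_i$ vertices introduced at step $i$ (for $i=1$, the vertices of $C(\alpha_1)$). When $k$ is even (standing assumption), equivalently: $\pi_i$ induces a clique if $i$ is odd and an independent set if $i$ is even, and for $i<j$ a vertex of $\pi_i$ and a vertex of $\pi_j$ are adjacent iff $j$ is even. Such graphs (with $k$ even) are called $\mathcal{C}$-graphs. $L=D-A$ is the Laplacian matrix. The quotient matrix $Q_L$ is the $k\times k$ matrix with $(Q_L)_{ij}=\sum_{v\in\pi_j}L_{uv}$ for any $u\in\pi_i$ (this is independent of the choice of $u$). *)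

From mathcomp Require Import all_boot all_order all_algebra.
Set Implicit Arguments. Unset Strict Implicit. Unset Printing Implicit Defensive.
Import Order.TTheory GRing.Theory Num.Theory.
Local Open Scope ring_scope.

(* Parts are indexed 1..k as in the paper; alpha i = alpha_i for 1 <= i <= k
   (values of alpha outside 1..k are irrelevant). Vertices are 0..n-1 with
   n = alpha_1 + ... + alpha_k, and pi_i = [apsum (i-1), apsum i). *)

Definition apsum (alpha : nat -> nat) (i : nat) : nat :=
  (\sum_(1 <= l < i.+1) alpha l)%N.

Definition in_part (alpha : nat -> nat) (i v : nat) : bool :=
  (apsum alpha i.-1 <= v < apsum alpha i)%N.

(* adjacency pattern between parts i and j (1-based):
   pi_i is a clique iff i odd (independent iff i even);
   for i <> j, pi_i and pi_j are completely joined iff max(i,j) is even *)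
Definition part_rel (i j : nat) : bool :=
  if i == j then odd i else ~~ odd (maxn i j).

Definition cadj (alpha : nat -> nat) (k n : nat) : rel 'I_n :=
  fun u v => (u != v) &&
    [exists i : 'I_k, exists j : 'I_k,
       [&& in_part alpha i.+1 u, in_part alpha j.+1 v & part_rel i.+1 j.+1]].

Definition laplacian (R : nzRingType) (n : nat) (adj : rel 'I_n) : 'M[R]_n :=
  \matrix_(u, v) (if u == v then (#|[set w | adj u w]|)%:R
                  else - ((adj u v : nat)%:R)).

(* quotient matrix: (Q_L)_{ij} = sum_{v in pi_j} L_{uv} for a chosen u in pi_i
   (matrix indices i : 'I_k stand for parts i+1) *)
Definition quot_mx (R : nzRingType) (alpha : nat -> nat) (k n : nat)
    (L : 'M[R]_n) : 'M[R]_k :=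
  \matrix_(i, j)
    match [pick u : 'I_n | in_part alpha i.+1 u] with
    | Some u => \sum_(v : 'I_n | in_part alpha j.+1 v) L u v
    | None => 0
    end.

(* Write L for the Laplacian and Q for its quotient matrix with respect to the
   parts pi_1, ..., pi_k.  If a function c on part indices is an eigenfunction
   of the "quotient action" c |-> (a |-> sum_j alpha_j [pi_a ~ pi_j] (c a - c j)),
   then its lift to the vertices is an eigenvector of L, and the vector of its
   values is an eigenvector of Q; so its eigenvalue is shared by L and Q.
   Explicit eigenfunctions are the constant function (eigenvalue 0) and, for
   1 <= m < k, the "cut" function equal to alpha_(m+1) on parts 1..m, to
   -(alpha_1 + ... + alpha_m) on part m+1 and to 0 beyond, whose eigenvalue is
   the sum of the even parts beyond m+1, plus alpha_1 + ... + alpha_(m+1) if m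
   is odd.  Listing these k values in the order of the theorem gives a strictly
   increasing sequence (consecutive values differ by one alpha_i > 0), hence k
   distinct roots of the degree-k polynomial char_poly Q, which therefore
   splits as stated. *)

From mathcomp Require Import all_boot all_order all_algebra zify ring.
Import Order.TTheory GRing.Theory Num.Theory.
Set Implicit Arguments. Unset Strict Implicit. Unset Printing Implicit Defensive.
Local Open Scope ring_scope.

Section Partition.

Variables (alpha : nat -> nat) (k : nat).

Local Notation n := (apsum alpha k).

Lemma apsum0 : apsum alpha 0 = 0%N.
Proof. by rewrite /apsum big_geq. Qed.

Lemma apsumS i : apsum alpha i.+1 = (apsum alpha i + alpha i.+1)%N.
Proof. by rewrite /apsum big_nat_recr. Qed.

Lemma apsum_mono i j : (i <= j)%N -> (apsum alpha i <= apsum alpha j)%N.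
Proof. by move=> ij; rewrite /apsum [X in (_ <= X)%N](big_cat_nat _ (n := i.+1)) ?leq_addr. Qed.

Lemma in_part_uniq i j v : in_part alpha i v -> in_part alpha j v -> i = j.
Proof.
wlog ij : i j / (i < j)%N.
  move=> W Hi Hj; case: (ltngtP i j) => [h|h|//]; first exact: W.
  by symmetry; apply: W.
rewrite /in_part => /andP[_ vi] /andP[vj _].
have := @apsum_mono i j.-1 ltac:(lia); lia.
Qed.

Lemma first_in_part i : (0 < alpha i.+1)%N -> in_part alpha i.+1 (apsum alpha i).
Proof. by rewrite /in_part apsumS /=; lia. Qed.

Definition part_of (v : nat) : nat :=
  (find (fun i => v < apsum alpha i.+1)%N (iota 0 k)).+1.

Lemma part_ofP v : (v < n)%N ->
  [/\ (1 <= part_of v)%N, (part_of v <= k)%N & in_part alpha (part_of v) v].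
Proof.
move=> vn; set P := fun i => (v < apsum alpha i.+1)%N.
have hasP : has P (iota 0 k).
  have k0 : (0 < k)%N by case: (k) vn; rewrite ?apsum0.
  by apply/hasP; exists k.-1; rewrite ?mem_iota /P prednK //; lia.
have fk : (find P (iota 0 k) < k)%N by rewrite -[X in (_ < X)%N](size_iota 0 k) -has_find.
have above : (v < apsum alpha (find P (iota 0 k)).+1)%N.
  by have := nth_find 0 hasP; rewrite nth_iota // add0n.
rewrite /part_of /in_part /= above andbT; split=> //.
case E: (find P (iota 0 k)) fk => [|f] fk; first by rewrite apsum0.
have := @before_find _ 0 P (iota 0 k) f; rewrite E nth_iota ?add0n; last lia.
by move=> /(_ (ltnSn f)) /negbT; rewrite /P -leqNgt.
Qed.

Lemma part_of_eq i v : (v < n)%N -> in_part alpha i v -> part_of v = i.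
Proof. by move=> /part_ofP[_ _ hv]; apply: in_part_uniq. Qed.

Lemma sum_by_parts (R : nzRingType) (g : nat -> R) m : (m <= k)%N ->
  \sum_(0 <= v < apsum alpha m) g (part_of v) = \sum_(1 <= j < m.+1) (alpha j)%:R * g j.
Proof.
elim: m => [|m IH] mk; first by rewrite apsum0 !big_geq.
rewrite (big_cat_nat _ (n := apsum alpha m)) //=; last by rewrite apsumS leq_addr.
rewrite IH 1?ltnW // [RHS]big_nat_recr //=; congr (_ + _).
rewrite (eq_big_nat _ _ (F2 := fun=> g m.+1)) => [|v /andP[v1 v2]].
  by rewrite sumr_const_nat apsumS addKn mulr_natl.
rewrite (@part_of_eq m.+1) ?(leq_trans v2) ?apsum_mono //.
by rewrite /in_part /= v1.
Qed.

End Partition.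

Lemma laplacian_mulE (R : comNzRingType) m (adj : rel 'I_m) (x : 'cV[R]_m) u :
  ~~ adj u u ->
  (laplacian R adj *m x) u 0 = \sum_v (adj u v)%:R * (x u 0 - x v 0).
Proof.
move=> /negbTE Auu.
have deg : #|[set w | adj u w]|%:R = \sum_v (adj u v)%:R :> R.
  rewrite -natr_sum cardsE -sum1_card big_mkcond /=.
  by congr _%:R.
rewrite mxE (bigD1 u) //= [RHS](bigD1 u) //= !mxE eqxx Auu mul0r add0r deg.
rewrite big_distrl /= (bigD1 u) //= Auu mul0r add0r -big_split /=.
by apply: eq_bigr => v vu; rewrite !mxE eq_sym (negbTE vu) mulrBr mulNr.
Qed.

Lemma char_poly_tr (R : comNzRingType) m (A : 'M[R]_m) : char_poly A^T = char_poly A.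
Proof.
rewrite /char_poly -det_tr; congr (\det _); apply/matrixP => i j.
by rewrite !mxE eq_sym.
Qed.

Lemma col_eigen_root (F : fieldType) m (A : 'M[F]_m) (x : 'cV_m) a :
  A *m x = a *: x -> x != 0 -> root (char_poly A) a.
Proof.
move=> Ax x0; rewrite -char_poly_tr -eigenvalue_root_char.
apply/eigenvalueP; exists x^T; first by rewrite -trmx_mul Ax linearZ.
by rewrite trmx_eq0.
Qed.

Lemma char_poly_distinct_roots (F : fieldType) m (A : 'M[F]_m) (lam : nat -> F) :
  uniq [seq lam i | i <- iota 1 m] ->
  (forall i, (1 <= i <= m)%N -> root (char_poly A) (lam i)) ->
  char_poly A = \prod_(1 <= i < m.+1) ('X - (lam i)%:P).
Proof.
move=> uniq_lam roots_lam.
have all_roots : all (root (char_poly A)) [seq lam i | i <- iota 1 m].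
  by apply/allP => z /mapP[i]; rewrite mem_iota => hi ->; apply: roots_lam; lia.
rewrite (all_roots_prod_XsubC _ all_roots); last by rewrite uniq_rootsE.
  by rewrite (monicP (char_poly_monic A)) scale1r big_map /index_iota subn1.
by rewrite size_char_poly size_map size_iota.
Qed.

Section QuotientAction.

Variables (alpha : nat -> nat) (k : nat).
Hypothesis alpha_pos : forall i, (1 <= i <= k)%N -> (0 < alpha i)%N.

Local Notation n := (apsum alpha k).
Local Notation part_of := (part_of alpha k).
Local Notation L R := (@laplacian R n (@cadj alpha k n)).

Lemma cadjE (u v : 'I_n) : @cadj alpha k n u v = (u != v) && part_rel (part_of u) (part_of v).
Proof.
rewrite /cadj; case: (u != v) => //=.
have [u1 uk hu] := part_ofP (ltn_ord u); have [v1 vk hv] := part_ofP (ltn_ord v).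
apply/existsP/idP => [[i /existsP[j /and3P[hi hj]]]|huv].
  by rewrite (in_part_uniq hu hi) (in_part_uniq hv hj).
have iu : ((part_of u).-1 < k)%N by lia.
have iv : ((part_of v).-1 < k)%N by lia.
exists (Ordinal iu); apply/existsP; exists (Ordinal iv).
have e1 : (Ordinal iu).+1 = part_of u by exact: prednK u1.
have e2 : (Ordinal iv).+1 = part_of v by exact: prednK v1.
by rewrite e1 e2 hu hv.
Qed.

(* The action of the Laplacian on functions constant on each part: part j
   contributes alpha_j (c a - c j) to part a whenever the two are joined. *)
Definition quot_action (R : nzRingType) (c : nat -> R) (a : nat) : R :=
  \sum_(1 <= j < k.+1) (alpha j)%:R * ((part_rel a j)%:R * (c a - c j)).

Definition lift (R : nzRingType) (c : nat -> R) : 'cV[R]_n :=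
  \col_(v < n) c (part_of v).

Lemma laplacian_lift (R : comNzRingType) (c : nat -> R) (u : 'I_n) :
  (L R *m lift c) u 0 = quot_action c (part_of u).
Proof.
rewrite laplacian_mulE ?cadjE ?eqxx //.
set g := fun j => (part_rel (part_of u) j)%:R * (c (part_of u) - c j).
transitivity (\sum_(v < n) g (part_of v)).
  apply: eq_bigr => v _; rewrite cadjE !mxE /g.
  by case: (eqVneq u v) => [->|_]; rewrite ?subrr ?mulr0.
by rewrite -(big_mkord xpredT (g \o part_of)) sum_by_parts.
Qed.

Lemma part_nonempty i : (i < k)%N -> (apsum alpha i < n)%N /\ in_part alpha i.+1 (apsum alpha i).
Proof.
move=> ik; have a_pos : (0 < alpha i.+1)%N by apply: alpha_pos; lia.
split; last exact: first_in_part.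
by apply: leq_trans (apsum_mono alpha ik); rewrite apsumS; lia.
Qed.

Lemma quot_mx_eigen (R : nzRingType) (M : 'M[R]_n) (c : nat -> R) lam :
  M *m lift c = lam *: lift c ->
  quot_mx alpha k M *m (\col_(i < k) c i.+1) = lam *: \col_(i < k) c i.+1.
Proof.
move=> eigM; apply/matrixP => i z; rewrite (ord1 z) !mxE.
under eq_bigr do rewrite !mxE.
case: pickP => [u hu|none]; last first.
  have [u0n u0i] := part_nonempty (ltn_ord i).
  by have := none (Ordinal u0n); rewrite /= u0i.
have <- : part_of u = i.+1 by apply: part_of_eq.
have := congr1 (fun V : 'cV[R]_n => V u 0) eigM; rewrite /= !mxE => <-.
under eq_bigr do rewrite big_distrl /=.
rewrite (exchange_big_dep xpredT) //=; apply: eq_bigr => v _; rewrite mxE.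
have [p1 pk hv] := part_ofP (ltn_ord v).
have jk : ((part_of v).-1 < k)%N by lia.
have ej : (Ordinal jk).+1 = part_of v by exact: prednK p1.
rewrite (bigD1 (Ordinal jk)) /= ?ej // big1 ?addr0 // => j /andP[hj jv].
have ej' : j.+1 = (Ordinal jk).+1 by rewrite ej; exact: in_part_uniq hj hv.
by move: jv; rewrite (_ : j = Ordinal jk) ?eqxx //; apply: val_inj; case: ej'.
Qed.

Lemma quot_eigenfun (R : fieldType) (c : nat -> R) lam : (0 < k)%N ->
  (forall a, (1 <= a <= k)%N -> quot_action c a = lam * c a) -> c 1%N != 0 ->
  eigenvalue (L R) lam /\ root (char_poly (quot_mx alpha k (L R))) lam.
Proof.
move=> k0 eig_c c1.
have eigL : L R *m lift c = lam *: lift c.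
  apply/matrixP => u z; rewrite (ord1 z) laplacian_lift [RHS]mxE mxE.
  by have [p1 pk _] := part_ofP (ltn_ord u); apply: eig_c; rewrite p1.
have [v0n v0] := part_nonempty k0; rewrite apsum0 in v0n v0.
split.
  rewrite eigenvalue_root_char; apply: col_eigen_root eigL _.
  apply/eqP => /matrixP/(_ (Ordinal v0n) 0); rewrite !mxE (part_of_eq v0n v0).
  by apply/eqP.
apply: col_eigen_root (quot_mx_eigen eigL) _.
by apply/eqP => /matrixP/(_ (Ordinal k0) 0); rewrite !mxE; apply/eqP.
Qed.

End QuotientAction.

Lemma part_rel_lt a j : (a < j)%N -> part_rel a j = ~~ odd j.
Proof. by move=> aj; rewrite /part_rel ltn_eqF // (maxn_idPr (ltnW aj)). Qed.

Lemma part_rel_gt a j : (j < a)%N -> part_rel a j = ~~ odd a.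
Proof. by move=> ja; rewrite /part_rel gtn_eqF // (maxn_idPl (ltnW ja)). Qed.

Section Eigenfunctions.

Variables (alpha : nat -> nat) (k : nat).

Local Notation quot_action := (quot_action alpha k).

Definition even_tail (t : nat) : nat := (\sum_(t.+1 <= l < k.+1 | ~~ odd l) alpha l)%N.

Definition cut_value (m : nat) : nat := (even_tail m.+1 + odd m * apsum alpha m.+1)%N.

(* The m-th cut eigenfunction: constant on the parts 1..m, balanced by part m+1
   (so that its lift is orthogonal to the all-ones vector) and zero beyond. *)
Definition cut_fun (R : nzRingType) (m j : nat) : R :=
  if (j <= m)%N then (alpha m.+1)%:R else if j == m.+1 then - (apsum alpha m)%:R else 0.

Lemma quot_action_cst (R : nzRingType) (x : R) a : quot_action (fun=> x) a = 0.
Proof. by rewrite /quot_action big1 // => j _; rewrite subrr !mulr0. Qed.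

Lemma low_block (R : nzRingType) (c : nat -> R) x m a : (m < a)%N ->
  (forall j, (j <= m)%N -> c j = x) ->
  \sum_(1 <= j < m.+1) (alpha j)%:R * ((part_rel a j)%:R * (c a - c j)) =
  (apsum alpha m)%:R * ((~~ odd a)%:R * (c a - x)).
Proof.
move=> ma cx; rewrite /apsum natr_sum big_distrl /=.
by apply: eq_big_nat => j /andP[_ jm]; rewrite part_rel_gt ?(cx j) //; lia.
Qed.

Lemma high_block (R : nzRingType) (c : nat -> R) m a : (a < m.+2)%N ->
  (forall j, (m.+2 <= j)%N -> c j = 0) ->
  \sum_(m.+2 <= j < k.+1) (alpha j)%:R * ((part_rel a j)%:R * (c a - c j)) =
  (even_tail m.+1)%:R * c a.
Proof.
move=> am c0; rewrite /even_tail [X in _ = X%:R * _]big_mkcond natr_sum big_distrl /=.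
apply: eq_big_nat => j /andP[mj _]; rewrite part_rel_lt ?(c0 j) ?subr0 //; last lia.
by case: (odd j); rewrite /= ?mul0r ?mul1r ?mulr0.
Qed.

Lemma cut_fun_eigen (R : comNzRingType) m a : (1 <= m < k)%N -> (1 <= a <= k)%N ->
  quot_action (cut_fun R m) a = (cut_value m)%:R * cut_fun R m a.
Proof.
move=> mk ak; set c := cut_fun R m.
have low j : (j <= m)%N -> c j = (alpha m.+1)%:R by rewrite /c /cut_fun => ->.
have mid : c m.+1 = - (apsum alpha m)%:R by rewrite /c /cut_fun ltnn eqxx.
have high j : (m.+2 <= j)%N -> c j = 0.
  by move=> mj; rewrite /c /cut_fun ifF ?ifF //; lia.
rewrite /quot_action (big_cat_nat _ (n := m.+1)) //=; last lia.
rewrite (@big_ltn _ _ _ m.+1); last lia.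
rewrite /cut_value natrD natrM apsumS natrD mid.
set A := (alpha m.+1)%:R; set S := (apsum alpha m)%:R; set E := (even_tail m.+1)%:R.
case: (ltngtP a m.+1) => [am|ma|->].
- rewrite high_block ?low //; last lia.
  rewrite big_nat big1 => [|j /andP[_ jm]]; last by rewrite (low j) ?subrr ?mulr0 //; lia.
  by rewrite part_rel_lt //=; case: (odd m); rewrite /= /A /S /E; ring.
- rewrite (low_block (x := A)) // ?high; [|lia|lia].
  rewrite big_nat big1 => [|j /andP[mj _]]; last by rewrite (high j) ?subrr ?mulr0 //; lia.
  by rewrite part_rel_gt //; case: (odd a); rewrite /= /A /S /E; ring.
- rewrite (low_block (x := A)) // ?high_block ?mid //.
  by rewrite /part_rel eqxx /=; case: (odd m); rewrite /= /A /S /E; ring.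
Qed.

End Eigenfunctions.

Section SortedSpectrum.

Variables (alpha : nat -> nat) (k : nat).
Hypotheses (k_ge2 : (2 <= k)%N) (k_even : ~~ odd k).
Hypothesis alpha_pos : forall i, (1 <= i <= k)%N -> (0 < alpha i)%N.

Local Notation even_tail := (even_tail alpha k).
Local Notation cut_value := (cut_value alpha k).

Lemma even_tail_ge t : (k <= t)%N -> even_tail t = 0%N.
Proof. by move=> kt; rewrite /even_tail big_geq. Qed.

Lemma even_tail_step t : (t < k)%N ->
  even_tail t = (~~ odd t.+1 * alpha t.+1 + even_tail t.+1)%N.
Proof. by move=> tk; rewrite /even_tail big_ltn_cond //=; case: (odd t); rewrite /= ?mul1n. Qed.

Lemma even_tail_skip t : odd t.+1 -> even_tail t = even_tail t.+1.
Proof.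
move=> o; case: (ltnP t k) => tk; first by rewrite even_tail_step // o.
by rewrite !even_tail_ge //; lia.
Qed.

Lemma cut_value_even m : ~~ odd m -> (m.+2 <= k)%N ->
  cut_value m = (cut_value m.+2 + alpha m.+2)%N.
Proof.
move=> ev mk; rewrite /cut_value /= (negbTE ev) /= !addn0.
rewrite even_tail_step // /= (negbTE ev) even_tail_skip /= ?negbK //; lia.
Qed.

Lemma cut_value_odd m : odd m -> (m.+3 <= k)%N ->
  cut_value m.+2 = (cut_value m + alpha m.+2)%N.
Proof.
move=> od mk; rewrite /cut_value /= od /= (@even_tail_skip m.+1) /= ?od //.
by rewrite (@even_tail_step m.+2) //= od !apsumS; lia.
Qed.

Lemma k_double : k = (k./2).*2.
Proof. by rewrite -[LHS]odd_double_half (negbTE k_even). Qed.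

(* The eigenvalues in increasing order: the cuts after k, k-2, ..., 2 (sums of
   trailing even parts), then the cuts after 1, 3, ..., k-1. *)
Definition sorted_value (i : nat) : nat :=
  if (i <= k./2)%N then cut_value (k - 2 * i + 2) else cut_value (2 * i - k - 1).

Lemma sorted_value_low i : (2 <= i <= k./2)%N ->
  sorted_value i = (sorted_value i.-1 + alpha (k - 2 * (i - 2)))%N.
Proof.
move=> hi; have kE := k_double.
rewrite /sorted_value ifT; last lia. rewrite ifT; last lia.
have -> : (k - 2 * i.-1 + 2 = (k - 2 * i + 2).+2)%N by lia.
have -> : (k - 2 * (i - 2) = (k - 2 * i + 2).+2)%N by lia.
have ev : ~~ odd (k - 2 * i + 2).
  by rewrite (_ : k - 2 * i + 2 = (k./2 - i + 1).*2)%N ?odd_double //; lia.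
by rewrite cut_value_even //; lia.
Qed.

Lemma sorted_value_high i : (k./2.+1 <= i <= k.-1)%N ->
  sorted_value i.+1 = (sorted_value i + alpha (2 * i - (k - 1)))%N.
Proof.
move=> hi; have kE := k_double.
rewrite /sorted_value ifF; last lia. rewrite ifF; last lia.
have -> : (2 * i.+1 - k - 1 = (2 * i - k - 1).+2)%N by lia.
have -> : (2 * i - (k - 1) = (2 * i - k - 1).+2)%N by lia.
have od : odd (2 * i - k - 1).
  by rewrite (_ : 2 * i - k - 1 = (i - k./2 - 1).*2.+1)%N /= ?odd_double //; lia.
by rewrite cut_value_odd //; lia.
Qed.

Lemma sorted_value_first : sorted_value 1 = 0%N.
Proof.
have kE := k_double; rewrite /sorted_value ifT; last lia.
have -> : (k - 2 * 1 + 2 = k)%N by lia.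
by rewrite /cut_value even_tail_ge // (negbTE k_even).
Qed.

Lemma sorted_value_last : sorted_value k = apsum alpha k.
Proof.
have kE := k_double; rewrite /sorted_value ifF; last lia.
have -> : (2 * k - k - 1 = (k./2 - 1).*2.+1)%N by lia.
rewrite /cut_value /= odd_double /= mul1n.
by rewrite (_ : (k./2 - 1).*2.+2 = k)%N ?even_tail_ge //; lia.
Qed.

(* Consecutive sorted values differ by the size of a (nonempty) part. *)
Lemma sorted_value_lt i : (1 <= i < k)%N -> (sorted_value i < sorted_value i.+1)%N.
Proof.
move=> hi; have kE := k_double.
case: (ltngtP i k./2) => h.
- rewrite (@sorted_value_low i.+1) /=; last lia.
  by have := alpha_pos (_ : 1 <= k - 2 * (i.+1 - 2) <= k)%N; lia.
- rewrite sorted_value_high; last lia.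
  by have := alpha_pos (_ : 1 <= 2 * i - (k - 1) <= k)%N; lia.
- rewrite /sorted_value ifT; last lia. rewrite ifF; last lia.
  have -> : (k - 2 * i + 2 = 2)%N by lia.
  have -> : (2 * i.+1 - k - 1 = 1)%N by lia.
  rewrite /cut_value /= (@even_tail_skip 2) // !apsumS apsum0.
  by have := alpha_pos (_ : 1 <= 1 <= k)%N; lia.
Qed.

Lemma sorted_value_inj : {in [pred i | 1 <= i <= k]%N &, injective sorted_value}.
Proof.
have incr : {in [pred i | 1 <= i <= k]%N &, {homo sorted_value : i j / i < j}}%N.
  apply: homo_ltn_in; first exact: ltn_trans.
    by move=> i j; rewrite !inE => Di Dj l /andP[il lj]; rewrite inE; lia.
  by move=> i; rewrite !inE => Di Di1; apply: sorted_value_lt; lia.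
move=> i j Di Dj eij; case: (ltngtP i j) => // [ij|ji].
  by have := incr i j Di Dj ij; rewrite eij ltnn.
by have := incr j i Dj Di ji; rewrite eij ltnn.
Qed.

Lemma sorted_value_cut i : (2 <= i <= k)%N ->
  exists2 m, (1 <= m < k)%N & sorted_value i = cut_value m.
Proof.
move=> hi; have kE := k_double; rewrite /sorted_value.
by case: ifP => hik; [exists (k - 2 * i + 2)%N | exists (2 * i - k - 1)%N] => //; lia.
Qed.

End SortedSpectrum.

(* Every sorted value is an eigenvalue of the Laplacian and of its quotient
   matrix, witnessed by the constant function (i = 1) or by a cut function. *)
Lemma sorted_value_eigen (R : numFieldType) alpha k i :
  (2 <= k)%N -> ~~ odd k -> (forall i, (1 <= i <= k)%N -> (0 < alpha i)%N) ->
  (1 <= i <= k)%N ->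
  let L := @laplacian R _ (@cadj alpha k (apsum alpha k)) in
  eigenvalue L (sorted_value alpha k i)%:R /\
  root (char_poly (quot_mx alpha k L)) (sorted_value alpha k i)%:R.
Proof.
move=> k2 ev apos hi L; have k0 : (0 < k)%N by lia.
have [->|i1] := eqVneq i 1%N.
  rewrite sorted_value_first //; apply: (quot_eigenfun apos (c := fun=> 1)) => //.
    by move=> a _; rewrite quot_action_cst mul0r.
  exact: oner_neq0.
have [|m hm ->] := sorted_value_cut alpha k2 ev (i := i); first lia.
apply: (quot_eigenfun apos (c := cut_fun alpha R m)) => // [a ha|].
  exact: cut_fun_eigen.
rewrite /cut_fun ifT; last lia.
by rewrite lt0r_neq0 // ltr0n apos //; lia.
Qed.

Theorem theorem2p1 (R : realFieldType) (k : nat) (alpha : nat -> nat) :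
  (2 <= k)%N -> ~~ odd k -> (forall i, (1 <= i <= k)%N -> (0 < alpha i)%N) ->
  let n := apsum alpha k in
  let L : 'M[R]_n := @laplacian R n (@cadj alpha k n) in
  let Q : 'M[R]_k := @quot_mx R alpha k n L in
  exists lam : nat -> R,
    [/\ (forall i, (1 <= i < k)%N -> lam i <= lam i.+1),
        char_poly Q = \prod_(1 <= i < k.+1) ('X - (lam i)%:P),
        (lam 1%N = 0 /\ lam k = n%:R),
        ((forall i, (2 <= i <= k./2)%N ->
            lam i = lam i.-1 + (alpha (k - 2 * (i - 2))%N)%:R) /\
        (forall i, (k./2.+1 <= i <= k.-1)%N ->
            lam i = lam i.+1 - (alpha (2 * i - (k - 1))%N)%:R)) &
        (forall i, (1 <= i <= k)%N -> eigenvalue L (lam i))].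
Proof.
move=> k2 ev apos n L Q.
have eig i := @sorted_value_eigen R alpha k i k2 ev apos.
exists (fun i => (sorted_value alpha k i)%:R); split.
- by move=> i hi; rewrite ler_nat ltnW // sorted_value_lt.
- apply: char_poly_distinct_roots => [|i hi]; last by case: (eig i hi).
  rewrite (map_comp (fun x : nat => x%:R)) map_inj_uniq; last exact: mulrIn (oner_neq0 R).
  rewrite map_inj_in_uniq ?iota_uniq // => i j; rewrite !mem_iota => hi hj.
  by apply: (sorted_value_inj k2 ev apos); rewrite inE; lia.
- by rewrite sorted_value_first // sorted_value_last.
- split=> i hi; first by rewrite sorted_value_low // natrD.
  by rewrite sorted_value_high // natrD addrK.
- by move=> i hi; case: (eig i hi).
Qed.
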